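(* Let $n\geqslant 2$ and $N=\{1,\ldots,n\}$. Then $\mathscr{BG}(n)$, viewed as a subset of $\mathbb{R}^{2^N\setminus\{\varnothing\}}$, is a $(2^n-1)$-dimensional polyhedral cone which is not pointed. Its lineality space has dimension $n$, with basis $(w_i)_{i\in N}$, where $w_i=\sum_{S\subseteq N,\, S\ni i}\delta_S$.
   Context: A game on $N=\{1,\ldots,n\}$ is a map $v:2^N\to\mathbb{R}$ with $v(\varnothing)=0$; games are identified with vectors in $\mathbb{R}^{2^N\setminus\{\varnothing\}}$. For nonempty $S\subseteq N$, the Dirac game $\delta_S$ is defined by $\delta_S(T)=1$ if $T=S$ and $0$ otherwise. A collection $\mathscr{B}$ of nonempty subsets of $N$ is balanced if there exist positive weights $(\lambda_S)_{S\in\mathscr{B}}$ with $\sum_{S\in\mathscr{B},S\ni i}\lambda_S=1$ for all $i\in N$; it is minimal balanced if no proper subcollection is balanced; a minimal balanced collection has a unique system of such weights, denoted $\lambda^{\mathscr{B}}_S$. $\mathfrak{B}^*(n)$ denotes the set of all minimal balanced collections on $N$ other than $\{N\}$. $\mathscr{BG}(n)$ is the set of games $v$ with $\sum_{S\in\mathscr{B}}\lambda^{\mathscr{B}}_S v(S)\leqslant v(N)$ for all $\mathscr{B}\in\mathfrak{B}^*(n)$ (the balanced games, equivalently those with nonempty core). *)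

From mathcomp Require Import all_boot all_order all_algebra.
Set Implicit Arguments. Unset Strict Implicit. Unset Printing Implicit Defensive.
Import Order.TTheory GRing.Theory Num.Theory.
Local Open Scope ring_scope.

(* Nonempty subsets of N = 'I_n (players are 0..n-1). *)
Notation nes n := {S : {set 'I_n} | S != set0}.

Section Games.
Variable R : realFieldType.

Definition game (n : nat) := {ffun nes n -> R}.

(* The value v(T) of a game at an arbitrary coalition T, with v(emptyset) = 0. *)
Definition gval n (v : game n) (T : {set 'I_n}) : R :=
  oapp (fun S : nes n => v S) 0 (insub T : option (nes n)).

Definition dirac n (S : {set 'I_n}) : game n := [ffun T : nes n => (val T == S)%:R].

Definition wgame n (i : 'I_n) : game n :=
  \sum_(S : {set 'I_n} | i \in S) dirac S.

Definition wseq n : seq (game n) := [seq wgame i | i <- enum 'I_n].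

Definition balancing_weights n (B : {set {set 'I_n}}) (lam : {set 'I_n} -> R) :=
  (forall S, S \in B -> 0 < lam S) /\
  (forall i : 'I_n, \sum_(S in B | i \in S) lam S = 1).

Definition balanced n (B : {set {set 'I_n}}) :=
  set0 \notin B /\ exists lam, balancing_weights B lam.

Definition minimal_balanced n (B : {set {set 'I_n}}) :=
  balanced B /\ forall B' : {set {set 'I_n}}, B' \proper B -> ~ balanced B'.

(* BG(n): for every minimal balanced collection B <> {N}, with its (unique)
   system of balancing weights lam^B, sum_S lam^B_S v(S) <= v(N). *)
Definition BG n (v : game n) : Prop :=
  forall B : {set {set 'I_n}}, minimal_balanced B -> B != [set setT] ->
  forall lam, balancing_weights B lam ->
    \sum_(S in B) lam S * gval v S <= gval v setT.

Definition dotp (T : finType) (a x : {ffun T -> R}) : R := \sum_t a t * x t.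

Definition polyhedral_cone (T : finType) (C : {ffun T -> R} -> Prop) :=
  exists A : seq {ffun T -> R}, forall x, C x <-> (forall a, a \in A -> dotp a x <= 0).

Definition lincomb (T : finType) (X : seq {ffun T -> R}) (c : 'I_(size X) -> R)
  : {ffun T -> R} := [ffun t => \sum_(i < size X) c i * X`_i t].

Definition in_span (T : finType) (X : seq {ffun T -> R}) (x : {ffun T -> R}) :=
  exists c : 'I_(size X) -> R, x = @lincomb T X c.

Definition lin_free (T : finType) (X : seq {ffun T -> R}) :=
  forall c : 'I_(size X) -> R, @lincomb T X c = 0 -> forall i, c i = 0.

(* For a cone (containing 0) this is the dimension
   of its affine hull, i.e. the dimension of the cone. *)
Definition dim_eq (T : finType) (C : {ffun T -> R} -> Prop) (d : nat) :=
  exists X : seq {ffun T -> R},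
    (forall x, x \in X -> C x) /\ lin_free X /\ size X = d /\
    (forall x, C x -> in_span X x).

Definition lineality (T : finType) (C : {ffun T -> R} -> Prop) (x : {ffun T -> R}) :=
  C x /\ C (- x).

Definition pointed (T : finType) (C : {ffun T -> R} -> Prop) :=
  forall x, lineality C x -> x = 0.

End Games.

(* Each minimal balanced collection B <> {N} contributes a single linear
   inequality, because its balancing weights are unique: two different systems
   lam, mu would give a nonnegative system lam + t (mu - lam) vanishing on some
   member of B, whose support is a smaller balanced collection.  So BG(n) is a
   polyhedral cone.  The game delta_N and the games -delta_S (S <> N) lie in it
   and form a basis, so the cone is full-dimensional.  A game v is in the
   lineality space iff all these inequalities are equalities.  The equalities
   for the partitions {S} u {{j} : j notin S} with S <> N (which include, as
   n >= 2, the partition into singletons) force v(S) = sum_(j in S) v({j}),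
   i.e. v = sum_j v({j}) w_j; conversely every such additive game satisfies
   all equalities. *)

From Stdlib Require Import Classical_Prop.
From mathcomp Require Import all_boot all_order all_algebra.
Set Implicit Arguments. Unset Strict Implicit. Unset Printing Implicit Defensive.
Import Order.TTheory GRing.Theory Num.Theory.
Local Open Scope ring_scope.

Section LinearAlgebra.
Variables (R : realFieldType) (T : finType).

Lemma polyhedral_coneP (J : finType) (P : J -> {ffun T -> R} -> Prop)
    (C : {ffun T -> R} -> Prop) :
  (forall j, exists a, forall x, P j x <-> dotp a x <= 0) ->
  (forall x, C x <-> forall j, P j x) -> polyhedral_cone C.
Proof.
move=> /fin_all_exists[a Pa] defC; exists [seq a j | j <- enum J] => x.
split=> [/defC Px _ /mapP[j _ ->] | Ax]; first exact/Pa.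
by apply/defC => j; apply/Pa/Ax/map_f; rewrite mem_enum.
Qed.

(* Written out pointwise: [*:] is not available on [{ffun T -> R}] itself. *)
Definition fincomb (I : finType) (f : I -> {ffun T -> R}) (c : I -> R) :
  {ffun T -> R} := [ffun t => \sum_i c i * f i t].

Section Family.
Variables (I : finType) (f : I -> {ffun T -> R}).
Let X := [seq f i | i <- enum I].

Lemma size_map_enum : size X = #|I|.
Proof. by rewrite size_map cardE. Qed.

Let rk (i : I) : 'I_(size X) := cast_ord (esym size_map_enum) (enum_rank i).
Let vl (k : 'I_(size X)) : I := enum_val (cast_ord size_map_enum k).

Let rkK : cancel rk vl.
Proof. by move=> i; rewrite /vl /rk cast_ordKV enum_rankK. Qed.

Let vlK : cancel vl rk.
Proof. by move=> k; rewrite /vl /rk enum_valK cast_ordK. Qed.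

Let lincomb_map_enum (c : 'I_(size X) -> R) : lincomb c = fincomb f (c \o rk).
Proof.
apply/ffunP => t; rewrite !ffunE (reindex rk) /=; last first.
  by exists vl => k _; rewrite ?rkK ?vlK.
apply: eq_bigr => i _; rewrite /X (nth_map i) ?nth_enum_rank //.
by rewrite -cardE ltn_ord.
Qed.

Lemma in_span_map_enum x :
  in_span X x <-> exists c : I -> R, x = fincomb f c.
Proof.
split=> [[c ->]|[c ->]]; first by exists (c \o rk); rewrite lincomb_map_enum.
exists (c \o vl); rewrite lincomb_map_enum.
by apply/ffunP => t; rewrite !ffunE; apply: eq_bigr => i _; rewrite /= rkK.
Qed.

Lemma lin_free_map_enum :
  (forall c : I -> R, fincomb f c = 0 -> forall i, c i = 0) -> lin_free X.
Proof.
by move=> freef c; rewrite lincomb_map_enum => /freef c0 k; rewrite -(vlK k) [c _]c0.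
Qed.

End Family.

Section Diagonal.
Variables (I : finType) (f : I -> {ffun T -> R}) (t : I -> T).
Hypothesis f_offdiag : forall i j, i != j -> f i (t j) = 0.

Lemma fincomb_diagE (c : I -> R) j : fincomb f c (t j) = c j * f j (t j).
Proof.
by rewrite ffunE (bigD1 j) //= big1 ?addr0 // => i ij; rewrite f_offdiag ?mulr0.
Qed.

Lemma diag_free (c : I -> R) : (forall i, f i (t i) != 0) ->
  fincomb f c = 0 -> forall i, c i = 0.
Proof.
move=> fii0 c0 i; apply/eqP; rewrite -(mulIr_eq0 _ (mulIf (fii0 i))) -fincomb_diagE.
by rewrite c0 ffunE.
Qed.

End Diagonal.

End LinearAlgebra.

Section Games.
Variables (R : realFieldType) (n : nat).
Implicit Types (v : game R n) (B : {set {set 'I_n}}) (S : {set 'I_n}).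

Lemma gval_val v (T : nes n) : gval v (val T) = v T.
Proof. by rewrite /gval valK. Qed.

Lemma gval0 v : gval v set0 = 0.
Proof. by rewrite /gval insubF ?eqxx. Qed.

Lemma gvalN v S : gval (- v) S = - gval v S.
Proof. by rewrite /gval; case: insubP => [T _ _|_] /=; rewrite ?ffunE ?oppr0. Qed.

Lemma sum_nes_gval (F : {set 'I_n} -> R) v :
  \sum_(T : nes n) F (val T) * v T = \sum_S F S * gval v S.
Proof.
rewrite (bigD1 set0) //= gval0 mulr0 add0r.
rewrite (reindex_omap (val : nes n -> _) insub) => [|S S0]; last by rewrite insubT.
by apply: eq_big => [T|T _]; rewrite ?valK ?eqxx ?(valP T) ?gval_val.
Qed.

Lemma wgameE (i : 'I_n) (T : nes n) : wgame R i T = (i \in val T)%:R.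
Proof.
rewrite /wgame sum_ffunE big_mkcond (bigD1 (val T)) //= ffunE eqxx big1 ?addr0.
  by case: (i \in val T).
by move=> S TS; rewrite ffunE eq_sym (negbTE TS); case: ifP.
Qed.

Definition additive_game (c : 'I_n -> R) : game R n :=
  [ffun T : nes n => \sum_(i in val T) c i].

Lemma gval_additive_game c S : gval (additive_game c) S = \sum_(i in S) c i.
Proof.
rewrite /gval; case: insubP => [T _ <-|]; first by rewrite /= ffunE.
by rewrite negbK => /eqP ->; rewrite big_set0.
Qed.

Lemma additive_gameN c : - additive_game c = additive_game (fun i => - c i).
Proof. by apply/ffunP => T; rewrite !ffunE sumrN. Qed.

Lemma fincomb_wgame c : fincomb (@wgame R n) c = additive_game c.
Proof.
apply/ffunP => T; rewrite !ffunE [RHS]big_mkcond /=.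
by apply: eq_bigr => i _; rewrite wgameE; case: (i \in val T); rewrite ?mulr1 ?mulr0.
Qed.

Lemma balancing_weights_sum B lam (c : 'I_n -> R) : balancing_weights B lam ->
  \sum_(S in B) lam S * \sum_(i in S) c i = \sum_i c i.
Proof.
move=> [_ lam1]; under eq_bigr => S _ do rewrite big_mkcond mulr_sumr.
rewrite exchange_big; apply: eq_bigr => i _.
transitivity (\sum_(S in B | i \in S) lam S * c i); last by rewrite -mulr_suml lam1 mul1r.
by rewrite big_mkcondr; apply: eq_bigr => S _; case: (i \in S); rewrite ?mulr0.
Qed.

Lemma BG_additive_game c : BG (additive_game c).
Proof.
move=> B _ _ lam lamB; under eq_bigr do rewrite gval_additive_game.
rewrite balancing_weights_sum // gval_additive_game.
by under [X in _ <= X]eq_bigl do rewrite in_setT.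
Qed.

Lemma lineality_additive_game c : lineality (@BG R n) (additive_game c).
Proof. by split; rewrite ?additive_gameN; apply: BG_additive_game. Qed.

Lemma lineality_balanced_eq v B lam : lineality (@BG R n) v ->
  minimal_balanced R B -> B != [set setT] -> balancing_weights B lam ->
  \sum_(S in B) lam S * gval v S = gval v setT.
Proof.
move=> [BGv BGNv] mbB BN lamB; apply/eqP; rewrite eq_le BGv //=.
have sumN : \sum_(S in B) lam S * gval (- v) S = - \sum_(S in B) lam S * gval v S.
  by rewrite -sumrN; apply: eq_bigr => S _; rewrite gvalN mulrN.
by have := BGNv B mbB BN lam lamB; rewrite sumN gvalN lerN2.
Qed.

End Games.

Section BalancingWeights.
Variables (R : realFieldType) (n : nat) (B : {set {set 'I_n}}).
Implicit Types (lam mu nu : {set 'I_n} -> R).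

Lemma balanced_support nu : set0 \notin B -> {in B, forall S, 0 <= nu S} ->
  (forall i, \sum_(S in B | i \in S) nu S = 1) -> balanced R [set S in B | 0 < nu S].
Proof.
move=> B0 nu_ge0 nu1; split; first by rewrite inE negb_and B0.
exists nu; split=> [S|i]; first by rewrite inE => /andP[].
rewrite -(nu1 i) big_mkcond [RHS]big_mkcond; apply: eq_bigr => S _.
rewrite inE; case SB: (S \in B) => //=; case: (i \in S); rewrite ?andbF ?andbT //.
by case: ltP => // nu_le0; apply/esym/eqP; rewrite eq_le nu_le0 nu_ge0.
Qed.

Lemma balancing_weights_le_eq lam mu : set0 \notin B ->
  balancing_weights B lam -> balancing_weights B mu ->
  {in B, forall S, lam S <= mu S} -> {in B, lam =1 mu}.
Proof.
move=> B0 [_ lam1] [_ mu1] le_lam_mu T TB.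
have /set0Pn[i iT] : T != set0 by apply: contraNneq B0 => <-.
have /psumr_eq0P dif0 : \sum_(S in B | i \in S) (mu S - lam S) = 0.
  by rewrite sumrB lam1 mu1 subrr.
apply/esym/eqP; rewrite -subr_eq0 dif0 ?TB ?iT // => S /andP[SB _].
by rewrite subr_ge0 le_lam_mu.
Qed.

Lemma minimal_balanced_weights_le lam mu : minimal_balanced R B ->
  balancing_weights B lam -> balancing_weights B mu -> {in B, forall S, lam S <= mu S}.
Proof.
move=> [[B0 _] minB] [lam_gt0 lam1] [_ mu1] S0 S0B; rewrite leNgt; apply/negP => ltS0.
pose r S := lam S / (lam S - mu S).
have [S1 /andP[S1B ltS1] minS1] :=
  arg_minP r (P := fun S => (S \in B) && (mu S < lam S)) (introT andP (conj S0B ltS0)).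
(* [t] is the largest step keeping [nu] nonnegative on [B]. *)
pose t := r S1; pose nu S := lam S + t * (mu S - lam S).
have t_gt0 : 0 < t by rewrite divr_gt0 ?lam_gt0 ?subr_gt0.
have nuS1 : nu S1 = 0.
  by rewrite /nu /t /r -[mu S1 - lam S1]opprB mulrN divfK ?subrr // subr_eq0 gt_eqF.
have nu_ge0 : {in B, forall S, 0 <= nu S}.
  move=> S SB; have [ltS|geS] := ltP (mu S) (lam S); last first.
    by apply: addr_ge0; [exact: ltW (lam_gt0 S SB) | rewrite mulr_ge0 ?subr_ge0 // ltW].
  have le_t : t <= r S by apply: minS1; rewrite SB ltS.
  have : t * (lam S - mu S) <= lam S by rewrite -ler_pdivlMr ?subr_gt0.
  by rewrite /nu -[mu S - lam S]opprB mulrN subr_ge0.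
have nu1 i : \sum_(S in B | i \in S) nu S = 1.
  by rewrite big_split /= -mulr_sumr sumrB lam1 mu1 subrr mulr0 addr0.
apply: (minB [set S in B | 0 < nu S]); last exact: balanced_support.
apply/properP; split; first by apply/subsetP => S; rewrite inE => /andP[].
by exists S1; rewrite // inE nuS1 ltxx andbF.
Qed.

Lemma minimal_balanced_weights_unique lam mu : minimal_balanced R B ->
  balancing_weights B lam -> balancing_weights B mu -> {in B, lam =1 mu}.
Proof.
move=> mbB lamB muB; apply: balancing_weights_le_eq => //; first by case: mbB => -[].
exact: minimal_balanced_weights_le.
Qed.

End BalancingWeights.

Section Polyhedral.
Variables (R : realFieldType) (n : nat).
Implicit Types (v : game R n) (B : {set {set 'I_n}}).

Definition balancing_constraint B (lam : {set 'I_n} -> R) : game R n :=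
  [ffun T : nes n => (val T \in B)%:R * lam (val T) - (val T == setT)%:R].

Lemma dotp_balancing_constraint B lam v :
  dotp (balancing_constraint B lam) v = \sum_(S in B) lam S * gval v S - gval v setT.
Proof.
rewrite /dotp; under eq_bigr do rewrite ffunE mulrBl.
rewrite sumrB (sum_nes_gval (fun S => (S \in B)%:R * lam S)).
have -> : \sum_(T : nes n) (val T == setT)%:R * v T = gval v setT.
  rewrite (sum_nes_gval (fun S => (S == setT)%:R)) (bigD1 setT) //= eqxx mul1r.
  by rewrite big1 ?addr0 // => S /negbTE->; rewrite mul0r.
congr (_ - _); rewrite [RHS]big_mkcond; apply: eq_bigr => S _.
by case: (S \in B); rewrite ?mul1r ?mul0r.
Qed.

Lemma BG_constraint_halfspace B : exists a : game R n, forall v,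
  (minimal_balanced R B -> B != [set setT] -> forall lam, balancing_weights B lam ->
     \sum_(S in B) lam S * gval v S <= gval v setT) <-> dotp a v <= 0.
Proof.
have [[mbB BN]|notmbB] := classic (minimal_balanced R B /\ B != [set setT]); last first.
  exists 0 => v; rewrite /dotp big1 => [|T _]; last by rewrite ffunE mul0r.
  by split=> // _ mbB BN; case: notmbB.
have [_ [lam lamB]] := mbB.1.
exists (balancing_constraint B lam) => v; rewrite dotp_balancing_constraint subr_le0.
split=> [/(_ mbB BN lam lamB) //|le_lam _ _ mu muB].
rewrite (eq_bigr (fun S => lam S * gval v S)) // => S SB.
by rewrite (minimal_balanced_weights_unique mbB muB lamB).
Qed.

Lemma BG_polyhedral_cone : polyhedral_cone (@BG R n).
Proof. exact: polyhedral_coneP BG_constraint_halfspace _. Qed.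

End Polyhedral.

Section FullDimension.
Variables (R : realFieldType) (n : nat).
Implicit Types (v : game R n) (S T : nes n).

Lemma card_nes : #|{: nes n}| = (2 ^ n - 1)%N.
Proof.
rewrite card_sig -[in RHS](card_ord n) -cardsT -card_powerset subn1.
have -> : #|powerset [set: 'I_n]| = #|{: {set 'I_n}}|.
  by apply: eq_card => S; rewrite powersetE subsetT.
by rewrite -(cardC1 set0); apply: eq_card => S; rewrite !inE.
Qed.

Definition top_sign (A : {set 'I_n}) : R := if A == setT then 1 else -1.

Lemma top_sign_sqr A : top_sign A * top_sign A = 1.
Proof. by rewrite /top_sign; case: ifP; rewrite ?mulr1 ?mulrNN ?mulr1. Qed.

Lemma top_sign_neq0 A : top_sign A != 0.
Proof. by rewrite /top_sign; case: ifP; rewrite ?oppr_eq0 oner_eq0. Qed.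

Definition signed_dirac S : game R n :=
  [ffun T => top_sign (val S) * (T == S)%:R].

Lemma gval_signed_dirac S (U : {set 'I_n}) :
  gval (signed_dirac S) U = top_sign (val S) * (U == val S)%:R.
Proof.
rewrite /gval; case: insubP => [T _ <-|]; first by rewrite /= ffunE.
by rewrite negbK => /eqP ->; rewrite eq_sym (negbTE (valP S)) mulr0.
Qed.

Lemma BG_signed_dirac S : BG (signed_dirac S).
Proof.
move=> B _ _ lam [lam_gt0 lam1]; under eq_bigr do rewrite gval_signed_dirac.
rewrite gval_signed_dirac /top_sign; case: eqVneq => [SN|SN]; last first.
  rewrite /= mulr0 -oppr_ge0 -sumrN sumr_ge0 // => U UB.
  by rewrite mulN1r mulrN opprK mulr_ge0 // ltW // lam_gt0.
have /set0Pn[i iS] := valP S.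
apply: (@le_trans _ _ (\sum_(U in B | i \in U) lam U)); last by rewrite lam1 mulr1.
rewrite big_mkcondr ler_sum // => U UB; rewrite mul1r.
case: eqVneq => [->|]; first by rewrite mulr1 iS.
by rewrite mulr0; case: ifP => // _; rewrite ltW // lam_gt0.
Qed.

Lemma fincomb_signed_diracE c T : fincomb signed_dirac c T = c T * top_sign (val T).
Proof.
rewrite (@fincomb_diagE _ _ _ _ id) /= ?ffunE ?eqxx ?mulr1 // => S U /negbTE.
by rewrite ffunE eq_sym => ->; rewrite mulr0.
Qed.

Lemma dim_BG : dim_eq (@BG R n) (2 ^ n - 1).
Proof.
exists [seq signed_dirac U | U <- enum {: nes n}]; split.
  by move=> _ /mapP[S _ ->]; apply: BG_signed_dirac.
split.
  apply: lin_free_map_enum => c; apply: (diag_free (t := id)) => [S1 S2 /negbTE|S].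
    by rewrite ffunE eq_sym => ->; rewrite mulr0.
  by rewrite ffunE eqxx mulr1 top_sign_neq0.
split; first by rewrite size_map_enum card_nes.
move=> x _; apply/in_span_map_enum; exists (fun T => x T * top_sign (val T)).
by apply/ffunP => T; rewrite fincomb_signed_diracE -mulrA top_sign_sqr mulr1.
Qed.

End FullDimension.

Lemma set1_neq0 (T : finType) (x : T) : [set x] != set0.
Proof. by apply/set0Pn; exists x; rewrite set11. Qed.

Lemma partition_set1 (T : finType) (A : {set T}) : partition [set [set j] | j in A] A.
Proof.
have [] := @indexed_partition _ _ A (@set1 T).
  by move=> i j _ _ ji; rewrite disjoints1 in_set1 eq_sym.
  by move=> i _; apply: set1_neq0.
suff -> : cover [set [set j] | j in A] = A by [].
apply/setP => x; rewrite cover_imset; apply/bigcupP/idP => [[j jA]|xA].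
  by rewrite in_set1 => /eqP ->.
by exists x; rewrite ?set11.
Qed.

Lemma partition_setU1_set1 (T : finType) (S : {set T}) : S != set0 ->
  partition (S |: [set [set j] | j in ~: S]) [set: T].
Proof.
move=> S0; rewrite -(setUCr S); apply: partitionU1 => //.
  exact: partition_set1.
by rewrite -subsets_disjoint.
Qed.

Section Partitions.
Variables (R : realFieldType) (n : nat).
Implicit Types (v : game R n) (P : {set {set 'I_n}}) (S : {set 'I_n}).

Lemma partition_balancing_weights P :
  partition P [set: 'I_n] -> balancing_weights P (fun=> 1 : R).
Proof.
move=> partP; split=> [S _|i]; first exact: ltr01.
have iP : i \in cover P by rewrite (cover_partition partP) in_setT.
rewrite (bigD1 (pblock P i)) ?pblock_mem ?mem_pblock //= big1 ?addr0 // => S.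
case/andP=> /andP[SP iS]; rewrite eq_sym (def_pblock (partition_trivIset partP) SP iS).
by rewrite eqxx.
Qed.

Lemma partition_minimal_balanced P :
  partition P [set: 'I_n] -> minimal_balanced R P.
Proof.
move=> partP; split.
  split; first by rewrite (partition0 partP).
  by exists (fun=> 1); apply: partition_balancing_weights.
move=> B /properP[BP [T TP TB]] [_ [mu [_ mu1]]].
have tiP := partition_trivIset partP.
have /set0Pn[i iT] := partition_neq0 partP TP.
have := mu1 i; rewrite big1 => [/esym/eqP|S /andP[SB iS]]; first by rewrite oner_eq0.
have SP := subsetP BP S SB.
by move: TB; rewrite -(def_pblock tiP TP iT) (def_pblock tiP SP iS) SB.
Qed.

Lemma lineality_partition_sum v P : lineality (@BG R n) v ->
  partition P [set: 'I_n] -> P != [set setT] -> \sum_(S in P) gval v S = gval v setT.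
Proof.
move=> linv partP PN; rewrite -(@lineality_balanced_eq _ _ _ _ (fun=> 1) linv _ PN).
- by apply: eq_bigr => S _; rewrite mul1r.
- exact: partition_minimal_balanced.
- exact: partition_balancing_weights.
Qed.

Lemma lineality_setU1_set1 v S : lineality (@BG R n) v -> S != set0 -> S != setT ->
  gval v S + \sum_(j in ~: S) gval v [set j] = gval v setT.
Proof.
move=> linv S0 ST; rewrite -(lineality_partition_sum linv (partition_setU1_set1 S0)).
  rewrite big_setU1 /= ?big_imset //=; first by move=> i j _ _ /set1_inj.
  by apply/imsetP => -[j]; rewrite in_setC => /[swap] ->; rewrite set11.
apply: contraNneq ST => P1.
by have := setU11 S [set [set j] | j in ~: S]; rewrite P1 in_set1.
Qed.

Hypothesis n_gt1 : (1 < n)%N.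

Lemma sum_set1_lineality v : lineality (@BG R n) v ->
  \sum_j gval v [set j] = gval v setT.
Proof.
move=> linv; pose i0 : 'I_n := Ordinal (ltnW n_gt1).
have i0N : [set i0] != setT.
  by apply/eqP => i0T; move: n_gt1; rewrite -[n]card_ord -cardsT -i0T cards1.
rewrite -(lineality_setU1_set1 linv (set1_neq0 i0) i0N) (bigD1 i0) //=.
by congr (_ + _); apply: eq_bigl => j; rewrite in_setC in_set1.
Qed.

Lemma lineality_additive v : lineality (@BG R n) v ->
  v = additive_game (fun i => gval v [set i]).
Proof.
move=> linv; apply/ffunP => T; rewrite ffunE -gval_val.
have [->|TN] := eqVneq (val T) setT.
  by rewrite -(sum_set1_lineality linv); under [RHS]eq_bigl do rewrite in_setT.
apply: (addrI (\sum_(j in ~: val T) gval v [set j])).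
rewrite addrC lineality_setU1_set1 ?(valP T) // -(sum_set1_lineality linv).
rewrite (bigID (mem (val T))) /= addrC; congr (_ + _).
by apply: eq_bigl => j; rewrite in_setC.
Qed.

End Partitions.

Section Lineality.
Variables (R : realFieldType) (n : nat).

Definition nes1 (i : 'I_n) : nes n := exist _ [set i] (set1_neq0 i).

Lemma wgame_nes1 (i j : 'I_n) : wgame R i (nes1 j) = (i == j)%:R.
Proof. by rewrite wgameE in_set1. Qed.

Lemma wseq_free : lin_free (wseq R n).
Proof.
apply: lin_free_map_enum => c; apply: (diag_free (t := nes1)) => [i j ij|i].
  by rewrite wgame_nes1 (negbTE ij).
by rewrite wgame_nes1 eqxx oner_eq0.
Qed.

Lemma wgame_additive (i : 'I_n) : wgame R i = additive_game (fun j => (j == i)%:R).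
Proof.
apply/ffunP => T; rewrite wgameE ffunE; have [iT|iT] := boolP (i \in val T).
  by rewrite (bigD1 i) //= eqxx big1 ?addr0 // => j /andP[_ /negbTE ->].
by rewrite big1 // => j jT; case: eqVneq jT iT => // -> ->.
Qed.

Lemma lineality_wgame (i : 'I_n) : lineality (@BG R n) (wgame R i).
Proof. by rewrite wgame_additive; apply: lineality_additive_game. Qed.

Lemma BG_not_pointed : (0 < n)%N -> ~ pointed (@BG R n).
Proof.
move=> n_gt0; pose i : 'I_n := Ordinal n_gt0.
move/(_ _ (lineality_wgame i)) => w0; have := wgame_nes1 i i.
by rewrite w0 ffunE eqxx => /eqP; rewrite eq_sym oner_eq0.
Qed.

Hypothesis n_gt1 : (1 < n)%N.

Lemma lineality_in_span_wseq v : lineality (@BG R n) v <-> in_span (wseq R n) v.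
Proof.
rewrite in_span_map_enum; split=> [/(lineality_additive n_gt1) ->|[c ->]].
  by exists (fun i => gval v [set i]); rewrite fincomb_wgame.
by rewrite fincomb_wgame; apply: lineality_additive_game.
Qed.

Lemma dim_lineality_BG : dim_eq (lineality (@BG R n)) n.
Proof.
exists (wseq R n); split; first by move=> _ /mapP[i _ ->]; apply: lineality_wgame.
split; first exact: wseq_free.
split; first by rewrite size_map_enum card_ord.
by move=> v /lineality_in_span_wseq.
Qed.

End Lineality.

Theorem theorem2 (R : realFieldType) (n : nat) (hn : (2 <= n)%N) :
  polyhedral_cone (@BG R n) /\
  dim_eq (@BG R n) (2 ^ n - 1) /\
  ~ pointed (@BG R n) /\
  dim_eq (lineality (@BG R n)) n /\
  lin_free (wseq R n) /\
  (forall x, lineality (@BG R n) x <-> in_span (wseq R n) x).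
Proof.
split; first exact: BG_polyhedral_cone.
split; first exact: dim_BG.
split; first exact: BG_not_pointed (ltnW hn).
split; first exact: dim_lineality_BG.
split; first exact: wseq_free.
exact: lineality_in_span_wseq.
Qed.
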